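(* Let $G_H$ be a finite undirected multigraph (parallel edges allowed, no self-loops) with vertex set $V$ and edge set partitioned as $E = S \sqcup S^c$ into secure edges $S$ and insecure edges $S^c$, and let $0 < p_J^{S^c} \le p_J^{S} \le p_I$ be real costs satisfying $p_J^{S^c} \ge p_I/2$ and $p_J^{S} \ge p_I/2$. Consider the following two problems. (I-A) Find a cut $C^*$ of minimum cardinality among cuts $C$ with $n^S_C < |C|/2$; form the attack on $C^*$ that injects data into $\lfloor (1+|C^*|)/2\rfloor$ insecure edges of $C^*$, jams $(1 - (|C^*| \bmod 2))$ further insecure edges of $C^*$, and leaves all other edges untouched. (I-B) Give weight $p_J^{S}$ to secure edges and $p_I - p_J^{S}$ to insecure edges, and find a cut $C^*$ of minimum weight among cuts $C$ with $n^S_C \ge |C|/2$ and $n^{S^c}_C > 0$; form the attack on $C^*$ that injects data into all insecure edges of $C^*$ and jams $n^S_{C^*} + 1 - n^{S^c}_{C^*}$ secure edges of $C^*$. Then, among the attacks produced by those of the two problems that have a feasible solution, one of minimum cost is an optimal detectable generalized attack in $G_H$.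
   Context: For a nonempty proper subset $U \subsetneq V$, the cut $\delta(U)$ is the set of edges with exactly one endpoint in $U$; a cut of $G_H$ is any set of this form. For a cut $C$, $n^S_C = |C\cap S|$ and $n^{S^c}_C = |C \cap S^c|$. The costs are: $p_J^{S^c}$ per jammed insecure edge, $p_J^S$ per jammed secure edge, $p_I$ per insecure edge with injected data. A generalized attack is a triple $(C,J,I)$ where $C$ is a cut, $J \subseteq C$ is the set of jammed edges, and $I \subseteq (C \cap S^c)\setminus J$ is a nonempty set of injected edges; its cost is $p_J^{S}|J\cap S| + p_J^{S^c}|J \cap S^c| + p_I |I|$. The attack is detectable if $2|I| > |C \setminus J|$ (the injected edges form a strict majority of the non-jammed edges of the cut). An optimal detectable generalized attack is one of minimum cost among all detectable generalized attacks. *)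

From HB Require Import structures.
From mathcomp Require Import all_boot all_order all_algebra.
Set Implicit Arguments. Unset Strict Implicit. Unset Printing Implicit Defensive.
Import Order.TTheory GRing.Theory Num.Theory.

(* A finite undirected multigraph: vertices V, edges E, each edge e has the
   (unordered) pair of endpoints {src e, dst e}; parallel edges are allowed
   (distinct elements of E with the same endpoints); no self loops is a
   hypothesis of the theorem. *)

Section Attacks.
Variables (V E : finType) (src dst : E -> V) (S : {set E}).

Definition delta (U : {set V}) : {set E} :=
  [set e | (src e \in U) != (dst e \in U)].

Definition is_cut (C : {set E}) : Prop :=
  exists U : {set V}, [/\ U != set0, U != setT & C = delta U].

Definition nS (C : {set E}) : nat := #|C :&: S|.
Definition nSc (C : {set E}) : nat := #|C :&: ~: S|.

Record gattack := GAttack { acut : {set E}; ajam : {set E}; ainj : {set E} }.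

Definition is_gattack (a : gattack) : Prop :=
  [/\ is_cut (acut a), ajam a \subset acut a,
      ainj a \subset (acut a :&: ~: S) :\: ajam a & ainj a != set0].

Definition detectable (a : gattack) : bool :=
  #|acut a :\: ajam a| < 2 * #|ainj a|.

Section Costs.
Variables (R : realFieldType) (pJS pJSc pI : R).

Definition cost (a : gattack) : R :=
  (pJS * #|ajam a :&: S|%:R + pJSc * #|ajam a :&: ~: S|%:R + pI * #|ainj a|%:R)%R.

Definition optimal_detectable (a : gattack) : Prop :=
  [/\ is_gattack a, detectable a &
      forall b, is_gattack b -> detectable b -> (cost a <= cost b)%R].

Definition feasA (C : {set E}) : Prop := is_cut C /\ 2 * nS C < #|C|.
Definition optA (C : {set E}) : Prop :=
  feasA C /\ forall C', feasA C' -> #|C| <= #|C'|.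
Definition attackA (C : {set E}) (a : gattack) : Prop :=
  [/\ acut a = C,
      ainj a \subset C :&: ~: S, #|ainj a| = (1 + #|C|) %/ 2,
      ajam a \subset (C :&: ~: S) :\: ainj a & #|ajam a| = 1 - (#|C| %% 2)].

Definition weightB (C : {set E}) : R :=
  (pJS * (nS C)%:R + (pI - pJS) * (nSc C)%:R)%R.
Definition feasB (C : {set E}) : Prop := [/\ is_cut C, #|C| <= 2 * nS C & 0 < nSc C].
Definition optB (C : {set E}) : Prop :=
  feasB C /\ forall C', feasB C' -> (weightB C <= weightB C')%R.
Definition attackB (C : {set E}) (a : gattack) : Prop :=
  [/\ acut a = C, ainj a = C :&: ~: S,
      ajam a \subset C :&: S & #|ajam a| = nS C + 1 - nSc C].

Definition produced (a : gattack) : Prop :=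
  exists C, (optA C /\ attackA C a) \/ (optB C /\ attackB C a).

End Costs.
End Attacks.

From HB Require Import structures.
From mathcomp Require Import all_boot all_order all_algebra.
From mathcomp Require Import zify ring lra.
Import Order.TTheory GRing.Theory Num.Theory.
Set Implicit Arguments. Unset Strict Implicit. Unset Printing Implicit Defensive.

(* A detectable attack (C, J, I) satisfies |C| < |J| + 2|I|, and I together
   with the insecure jams fits into the insecure edges of C.  Every jam costs
   at least p_I/2.  If C has a secure minority, the cost is therefore at least
   p_I (|C| + 1)/2, rounded up to the price of the (I-A) attack on C; that
   price grows with |C|, so the (I-A) attack on the smallest such cut is no
   dearer.  If C has a secure majority, 2 p_J^S >= p_I and p_J^S + p_J^{S^c} >= p_I
   bound the cost below by the (I-B) weight of C plus p_J^S, which is exactly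
   the cost of the (I-B) attack on C, so the (I-B) attack on a minimum-weight
   cut is no dearer. *)

Lemma subset_of_card (T : finType) (A : {set T}) n :
  n <= #|A| -> exists2 B : {set T}, B \subset A & #|B| = n.
Proof.
move/card_geqP => [s [uniq_s size_s s_sub]]; exists [set x in s].
  by apply/subsetP => x; rewrite inE; exact: s_sub.
by rewrite cardsE (card_uniqP uniq_s).
Qed.

Lemma cardsIsplit (T : finType) (A B : {set T}) : #|A| = #|A :&: B| + #|A :&: ~: B|.
Proof. by rewrite -setDE cardsID. Qed.

Local Open Scope ring_scope.

Section CostArithmetic.
Variables (R : realFieldType) (pJS pJSc pI : R).

Lemma jam_inject_lower_bound (k x i : nat) :
  0 <= pI -> pI / 2%:R <= pJSc ->
  (2 * k <= x + 2 * i)%N -> pI * k%:R <= pJSc * x%:R + pI * i%:R.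
Proof.
move=> pI_ge0 half_le_pJSc; rewrite -(ler_nat R) natrD !natrM => le_k.
have half_ge0 : 0 <= pI / 2%:R by lra.
have := ler_wpM2l half_ge0 le_k.
have := ler_wpM2r (ler0n R x) half_le_pJSc.
nra.
Qed.

Lemma attackA_cost_lower_bound (n x i : nat) :
  0 <= pI -> pI / 2%:R <= pJSc -> pJSc <= pI -> (n < x + 2 * i)%N ->
  pI * ((1 + n) %/ 2)%:R + pJSc * (1 - n %% 2)%:R <= pJSc * x%:R + pI * i%:R.
Proof.
move=> pI_ge0 half_le_pJSc pJSc_le_pI lt_n.
have [n_odd | n_even] : (n %% 2 = 1 \/ n %% 2 = 0)%N by lia.
  by rewrite n_odd subnn mulr0 addr0; apply: jam_inject_lower_bound => //; lia.
rewrite n_even subn0 mulr1; set k := ((1 + n) %/ 2)%N.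
case: x lt_n => [|x] lt_n.
- have : (k + 1)%:R <= i%:R :> R by rewrite ler_nat; lia.
  rewrite natrD mulr0 add0r => le_ki.
  have := ler_wpM2l pI_ge0 le_ki.
  lra.
- have := @jam_inject_lower_bound k x i pI_ge0 half_le_pJSc ltac:(lia).
  rewrite -addn1 natrD; lra.
Qed.

Lemma attackB_cost_lower_bound (s t js jc i : nat) :
  0 <= pI -> pI / 2%:R <= pJSc -> pI / 2%:R <= pJS ->
  (s + t < js + jc + 2 * i)%N -> (i + jc <= t)%N ->
  pJS * s%:R + (pI - pJS) * t%:R + pJS <= pJS * js%:R + pJSc * jc%:R + pI * i%:R.
Proof.
move=> pI_ge0 half_le_pJSc half_le_pJS lt_st le_t.
have le_js : (s + t + 1)%N%:R <= (js + jc + i + i)%N%:R :> R by rewrite ler_nat; lia.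
rewrite !natrD in le_js.
have {}le_t : i%:R + jc%:R <= t%:R :> R by rewrite -natrD ler_nat.
have jam_excess : 0 <= pJS * (js%:R + jc%:R + i%:R + i%:R - (s%:R + t%:R + 1)).
  by apply: mulr_ge0; lra.
have free_insecure : 0 <= (2%:R * pJS - pI) * (t%:R - i%:R - jc%:R).
  by apply: mulr_ge0; lra.
have insecure_jams : 0 <= (pJS + pJSc - pI) * jc%:R.
  by apply: mulr_ge0; [lra | exact: ler0n].
lra.
Qed.

End CostArithmetic.

Section Attacks.
Variables (V E : finType) (src dst : E -> V) (S : {set E}).
Variables (R : realFieldType) (pJS pJSc pI : R).

Definition cutb (C : {set E}) : bool :=
  [exists U : {set V}, [&& U != set0, U != setT & C == delta src dst U]].

Lemma cutP C : reflect (is_cut src dst C) (cutb C).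
Proof.
apply: (iffP existsP) => [[U /and3P [U0 UT /eqP ->]] | [U [U0 UT ->]]].
  by exists U.
by exists U; rewrite U0 UT eqxx.
Qed.

Lemma optA_exists C0 : feasA src dst S C0 -> exists C, optA src dst S C.
Proof.
move=> [/cutP cut_C0 small_C0].
pose P := [pred C | cutb C & 2 * nS S C < #|C|]%N.
have P_C0 : P C0 by rewrite /= cut_C0.
have [C /andP [/cutP cut_C small_C] C_min] := arg_minnP (fun C : {set E} => #|C|) P_C0.
exists C; split=> // C' [/cutP cut_C' small_C'].
by apply: C_min; rewrite inE /= cut_C'.
Qed.

Lemma optB_exists C0 : feasB src dst S C0 -> exists C, optB src dst S pJS pI C.
Proof.
move=> [/cutP cut_C0 large_C0 ins_C0].
pose P := [pred C | [&& cutb C, #|C| <= 2 * nS S C & 0 < nSc S C]]%N.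
have P_C0 : P C0 by rewrite /= cut_C0 large_C0.
have [C /and3P [/cutP cut_C large_C ins_C] C_min] := arg_minP (weightB S pJS pI) P_C0.
exists C; split=> // C' [/cutP cut_C' large_C' ins_C'].
by apply: C_min; rewrite inE /= cut_C' large_C'.
Qed.

Lemma attackA_exists C : feasA src dst S C -> exists a, attackA S C a.
Proof.
move=> [_ small_C]; have := cardsIsplit C S; rewrite /nS in small_C => split_C.
have [I sub_I card_I] :
    exists2 I : {set E}, I \subset C :&: ~: S & #|I| = ((1 + #|C|) %/ 2)%N.
  by apply: subset_of_card; lia.
have [J sub_J card_J] :
    exists2 J : {set E}, J \subset (C :&: ~: S) :\: I & #|J| = (1 - #|C| %% 2)%N.
  by apply: subset_of_card; rewrite cardsDS // card_I; lia.
by exists (GAttack C J I).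
Qed.

Lemma attackB_exists C : feasB src dst S C -> exists a, attackB S C a.
Proof.
move=> [_ large_C ins_C]; have := cardsIsplit C S.
rewrite /nS /nSc in large_C ins_C * => split_C.
have [J sub_J card_J] :
    exists2 J : {set E}, J \subset C :&: S & #|J| = (#|C :&: S| + 1 - #|C :&: ~: S|)%N.
  by apply: subset_of_card; lia.
by exists (GAttack C J (C :&: ~: S)).
Qed.

Lemma attackA_detectable C a :
  feasA src dst S C -> attackA S C a -> is_gattack src dst S a /\ detectable a.
Proof.
case: a => _ J I [cut_C small_C] [/= -> sub_I card_I sub_J card_J].
have := cardsIsplit C S; rewrite /nS in small_C => split_C.
have sub_JC : J \subset C.
  by apply: (subset_trans sub_J); rewrite subDset subsetU // subsetIl orbT.
split; last by rewrite /detectable /= cardsDS // card_I card_J; lia.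
split=> //=; last by rewrite -card_gt0 card_I; lia.
apply/subsetP => x x_I; rewrite inE (subsetP sub_I x x_I) andbT.
by apply/negP => /(subsetP sub_J); rewrite inE x_I.
Qed.

Lemma attackB_detectable C a :
  feasB src dst S C -> attackB S C a -> is_gattack src dst S a /\ detectable a.
Proof.
case: a => _ J _ [cut_C large_C ins_C] [/= -> -> sub_J card_J].
have := cardsIsplit C S; rewrite /nS /nSc in large_C ins_C card_J => split_C.
have sub_JC : J \subset C by apply: (subset_trans sub_J); exact: subsetIl.
split; last by rewrite /detectable /= cardsDS // card_J; lia.
split=> //=; last by rewrite -card_gt0.
apply/subsetP => x x_ins; rewrite inE x_ins andbT.
by apply/negP => /(subsetP sub_J); move: x_ins; rewrite !inE => /andP [-> /negPf ->].
Qed.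

Lemma attackA_cost C a :
  attackA S C a ->
  cost S pJS pJSc pI a = pI * ((1 + #|C|) %/ 2)%N%:R + pJSc * (1 - #|C| %% 2)%N%:R.
Proof.
case: a => _ J I [/= -> sub_I card_I sub_J card_J].
have J_insecure : J \subset ~: S.
  by apply: (subset_trans sub_J); rewrite subDset subsetU // subsetIr orbT.
rewrite /cost /= (setIidPl J_insecure).
have -> : J :&: S = set0 by apply/eqP; rewrite setI_eq0 disjoints_subset.
by rewrite cards0 card_J card_I mulr0 add0r addrC.
Qed.

Lemma attackB_cost C a :
  feasB src dst S C -> attackB S C a ->
  cost S pJS pJSc pI a = weightB S pJS pI C + pJS.
Proof.
case: a => _ J _ [_ large_C ins_C] [/= -> -> sub_J card_J].
have J_secure : J \subset S by apply: (subset_trans sub_J); exact: subsetIr.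
rewrite /cost /weightB /= (setIidPl J_secure).
have -> : J :&: ~: S = set0 by apply/eqP; rewrite setI_eq0 disjoints_subset setCK.
rewrite cards0 mulr0 addr0 card_J.
have := cardsIsplit C S; rewrite /nS /nSc in large_C ins_C * => split_C.
rewrite natrB; last by lia.
rewrite natrD; ring.
Qed.

Lemma detectable_card_bounds b :
  is_gattack src dst S b -> detectable b ->
  [/\ #|acut b| < #|ajam b| + 2 * #|ainj b|,
      #|ainj b| + #|ajam b :&: ~: S| <= nSc S (acut b) & 0 < #|ainj b|]%N.
Proof.
case: b => C J I [_ /= sub_JC sub_I I_gt0]; rewrite /detectable /= cardsDS // => det.
rewrite card_gt0 I_gt0; split=> //; first by lia.
have le_I : (#|I| <= #|(C :&: ~: S) :\: J|)%N by exact: subset_leq_card.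
have le_J : (#|J :&: ~: S| <= #|(C :&: ~: S) :&: J|)%N.
  by apply: subset_leq_card; rewrite subsetI subsetIl andbT setSI.
by have := cardsID J (C :&: ~: S); rewrite /nSc; lia.
Qed.

Lemma cost_ge_uniform_jam b :
  pJSc <= pJS -> pJSc * #|ajam b|%:R + pI * #|ainj b|%:R <= cost S pJS pJSc pI b.
Proof.
move=> pJSc_le_pJS; rewrite /cost (cardsIsplit (ajam b) S) natrD mulrDr.
by rewrite lerD2r lerD2r ler_wpM2r.
Qed.

Lemma produced_detectable a :
  produced src dst S pJS pI a -> is_gattack src dst S a /\ detectable a.
Proof.
move=> [C [[[feas_C _] att_a] | [[feas_C _] att_a]]].
  exact: attackA_detectable att_a.
exact: attackB_detectable att_a.
Qed.

Lemma optA_attack_cost_le b :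
  0 <= pI -> pI / 2%:R <= pJSc -> pJSc <= pJS -> pJS <= pI ->
  is_gattack src dst S b -> detectable b -> (2 * nS S (acut b) < #|acut b|)%N ->
  exists2 a, produced src dst S pJS pI a & cost S pJS pJSc pI a <= cost S pJS pJSc pI b.
Proof.
move=> pI_ge0 half_le_pJSc pJSc_le_pJS pJS_le_pI att_b det_b small_b.
have [cut_b _ _ _] := att_b.
have [C [feas_C C_min]] := optA_exists (conj cut_b small_b).
have [a att_a] := attackA_exists feas_C.
exists a; first by exists C; left.
have [det_card _ _] := detectable_card_bounds att_b det_b.
have le_C := C_min _ (conj cut_b small_b).
rewrite (attackA_cost att_a); apply: le_trans (cost_ge_uniform_jam _ pJSc_le_pJS).
by apply: attackA_cost_lower_bound => //; [exact: le_trans pJS_le_pI | lia].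
Qed.

Lemma optB_attack_cost_le b :
  0 <= pI -> pI / 2%:R <= pJSc -> pI / 2%:R <= pJS ->
  is_gattack src dst S b -> detectable b -> (#|acut b| <= 2 * nS S (acut b))%N ->
  exists2 a, produced src dst S pJS pI a & cost S pJS pJSc pI a <= cost S pJS pJSc pI b.
Proof.
move=> pI_ge0 half_le_pJSc half_le_pJS att_b det_b large_b.
have [cut_b _ _ _] := att_b.
have [det_card ins_b I_gt0] := detectable_card_bounds att_b det_b.
have feas_b : feasB src dst S (acut b) by split=> //; lia.
have [C [feas_C C_min]] := optB_exists feas_b.
have [a att_a] := attackB_exists feas_C.
exists a; first by exists C; right.
rewrite (attackB_cost feas_C att_a); apply: le_trans (lerD (C_min _ feas_b) (lexx _)) _.
have := cardsIsplit (ajam b) S; have := cardsIsplit (acut b) S => split_C split_J.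
by apply: attackB_cost_lower_bound => //; rewrite /nS /nSc in ins_b *; lia.
Qed.

Lemma produced_cost_le b :
  0 <= pI -> pI / 2%:R <= pJSc -> pI / 2%:R <= pJS -> pJSc <= pJS -> pJS <= pI ->
  is_gattack src dst S b -> detectable b ->
  exists2 a, produced src dst S pJS pI a & cost S pJS pJSc pI a <= cost S pJS pJSc pI b.
Proof.
move=> pI_ge0 half_le_pJSc half_le_pJS pJSc_le_pJS pJS_le_pI att_b det_b.
have [small_b | large_b] := ltnP (2 * nS S (acut b)) #|acut b|.
  exact: optA_attack_cost_le.
exact: optB_attack_cost_le.
Qed.

End Attacks.

(* Self-loops never lie in a cut. *)
Theorem theorem5 (V E : finType) (src dst : E -> V) (S : {set E})
    (R : realFieldType) (pJS pJSc pI : R) :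
  (forall e, src e != dst e) ->
  (0 < pJSc)%R -> (pJSc <= pJS)%R -> (pJS <= pI)%R ->
  (pI / 2%:R <= pJSc)%R -> (pI / 2%:R <= pJS)%R ->
  forall a : gattack E,
    produced src dst S pJS pI a ->
    (forall b, produced src dst S pJS pI b ->
       (cost S pJS pJSc pI a <= cost S pJS pJSc pI b)%R) ->
    optimal_detectable src dst S pJS pJSc pI a.
Proof.
move=> _ pJSc_gt0 pJSc_le_pJS pJS_le_pI half_le_pJSc half_le_pJS a prod_a a_min.
have pI_ge0 : 0 <= pI by lra.
have [att_a det_a] := produced_detectable prod_a.
split=> // b att_b det_b.
have [a' prod_a' le_a'b] := produced_cost_le pI_ge0 half_le_pJSc half_le_pJS
  pJSc_le_pJS pJS_le_pI att_b det_b.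
exact: le_trans (a_min _ prod_a') le_a'b.
Qed.
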